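(* Let $L \ge N$, let $\mathbf{T} \in \mathbb{R}^{L\times N}$ have full rank $N$, and let $\gamma>0$. Define $H:\mathbb{R}^N\rightrightarrows\mathbb{R}^N$ by $\mathbf{y}\in H(\mathbf{x})$ if and only if $\mathbf{x} = \mathbf{T}^{\dagger}S_\gamma\mathbf{T}(\mathbf{x}+\mathbf{y})$. Let $$\mathcal{U}_{\mathbf{T},\gamma} := \{\mathbf{x}\in\mathbb{R}^N : |(\mathbf{T}\mathbf{x})_j| > \gamma(\|\mathbf{T}\mathbf{T}^{\dagger}\|_\infty + 1)\ \text{for all } j=1,\dots,L\}.$$ Then for every $\mathbf{x}\in\mathcal{U}_{\mathbf{T},\gamma}$ the set $H(\mathbf{x})$ consists of exactly one element, namely $H(\mathbf{x}) = \{\gamma\,\mathbf{T}^{\dagger}\operatorname{sign}(\mathbf{T}\mathbf{x})\}$.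
   Context: $\mathbf{T}^*$ is the transpose, $\mathbf{T}^{\dagger}=(\mathbf{T}^*\mathbf{T})^{-1}\mathbf{T}^*$ the Moore–Penrose inverse. $S_\gamma:\mathbb{R}^L\to\mathbb{R}^L$ is componentwise soft shrinkage: $[S_\gamma(\mathbf{y})]_j = y_j-\gamma$ if $y_j\ge\gamma$, $y_j+\gamma$ if $y_j\le-\gamma$, $0$ if $|y_j|<\gamma$. $\|\mathbf{A}\|_\infty = \max_{\|\mathbf{z}\|_\infty=1}\|\mathbf{A}\mathbf{z}\|_\infty$ is the row-sum matrix norm, with $\|\mathbf{z}\|_\infty=\max_j|z_j|$. For $\mathbf{z}\in\mathbb{R}^L$ with no zero components, $\operatorname{sign}\mathbf{z} = (\operatorname{sign} z_j)_{j=1}^L$ with $\operatorname{sign} z_j = 1$ if $z_j>0$ and $-1$ if $z_j<0$. *)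

From mathcomp Require Import all_boot all_order all_algebra.
Set Implicit Arguments. Unset Strict Implicit. Unset Printing Implicit Defensive.
Import Order.TTheory GRing.Theory Num.Theory.
Local Open Scope ring_scope.

(* Moore-Penrose inverse of a full-column-rank matrix: (T^T T)^{-1} T^T *)
Definition pinv (R : realFieldType) (L N : nat) (T : 'M[R]_(L, N)) : 'M[R]_(N, L) :=
  invmx (T^T *m T) *m T^T.

Definition shrink1 (R : realFieldType) (g y : R) : R :=
  if g <= y then y - g else if y <= - g then y + g else 0.

Definition shrink (R : realFieldType) (L : nat) (g : R) (y : 'cV[R]_L) : 'cV[R]_L :=
  \col_j shrink1 g (y j ord0).

Definition mxnorm_inf (R : realFieldType) (m n : nat) (A : 'M[R]_(m, n)) : R :=
  \big[Num.max/0]_(i < m) \sum_(j < n) `|A i j|.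

(* componentwise sign (1 if > 0, -1 if < 0; used only on vectors with no zero entries) *)
Definition sgnv (R : realFieldType) (L : nat) (z : 'cV[R]_L) : 'cV[R]_L :=
  \col_j (if 0 < z j ord0 then 1 else -1).

Definition Hrel (R : realFieldType) (L N : nat) (T : 'M[R]_(L, N)) (g : R)
  (x y : 'cV[R]_N) : Prop :=
  x = pinv T *m shrink g (T *m (x + y)).

Definition U_set (R : realFieldType) (L N : nat) (T : 'M[R]_(L, N)) (g : R)
  (x : 'cV[R]_N) : Prop :=
  forall j : 'I_L, g * (mxnorm_inf (T *m pinv T) + 1) < `|(T *m x) j ord0|.

(* Write P := T^dagger, so that P T = 1.  Every y in H(x) has the form
   y = gamma P s with |s_j| <= 1, because |z - S_gamma z| <= gamma.  For such
   y the perturbation T y = gamma (T P) s has entries of size at most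
   gamma ||T P||_oo, so on U_{T,gamma} it cannot change the sign of any entry
   of T x, nor push it into the dead zone of the shrinkage: there
   S_gamma T (x + y) = T (x + y) - gamma sign(T x).  Applying P, the fixed-point
   equation x = P S_gamma T (x + y) becomes y = gamma P sign(T x). *)

From mathcomp Require Import all_boot all_order all_algebra.
From mathcomp Require Import lra.

Set Implicit Arguments.
Unset Strict Implicit.
Unset Printing Implicit Defensive.

Import Order.TTheory GRing.Theory Num.Theory.
Local Open Scope ring_scope.

Lemma addrBI_eq (V : zmodType) (x y z : V) : x + y - z = x -> y = z.
Proof. by move/eqP; rewrite subr_eq => /eqP/addrI. Qed.

Section PseudoInverse.
Variable R : realFieldType.

Lemma mulmx_tr_eq0 (n : nat) (w : 'rV[R]_n) : w *m w^T = 0 -> w = 0.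
Proof.
move/(congr1 (fun M : 'M[R]_1 => M ord0 ord0)); rewrite !mxE => /eqP.
rewrite psumr_eq0 => [/allP w2_eq0|j _]; last by rewrite mxE -expr2 sqr_ge0.
apply/matrixP => i k; rewrite (ord1 i) mxE.
by have := w2_eq0 k (mem_index_enum _); rewrite mxE /= -expr2 sqrf_eq0 => /eqP.
Qed.

Lemma gram_unitmx (m n : nat) (T : 'M[R]_(m, n)) :
  \rank T = n -> T^T *m T \in unitmx.
Proof.
move=> rT; have freeTt : row_free T^T by rewrite /row_free mxrank_tr rT.
rewrite -row_free_unit; apply: inj_row_free => u uTtT0.
apply: (row_free_inj freeTt); rewrite mul0mx; apply: mulmx_tr_eq0.
by rewrite trmx_mul trmxK mulmxA -(mulmxA u) uTtT0 mul0mx.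
Qed.

Lemma mul_pinv_mx (m n : nat) (T : 'M[R]_(m, n)) :
  \rank T = n -> pinv T *m T = 1%:M.
Proof. by move=> rT; rewrite /pinv -mulmxA mulVmx ?gram_unitmx. Qed.

End PseudoInverse.

Section Shrinkage.
Variable R : realFieldType.
Implicit Types g t e : R.

Lemma shrink1_dist g t : 0 <= g -> `|t - shrink1 g t| <= g.
Proof.
move=> g_ge0; rewrite /shrink1 ler_norml.
case: ifP => [|/negbT]; first by move=> *; apply/andP; split; lra.
case: ifP => [|/negbT]; first by move=> *; apply/andP; split; lra.
by rewrite -!ltNge => *; apply/andP; split; lra.
Qed.

Lemma shrink1_translate g t e : 0 <= g -> g + `|e| < `|t| ->
  shrink1 g (t + e) = t + e - g * (if 0 < t then 1 else -1).
Proof.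
move=> g_ge0 lt_e; have le_e := ler_norm e; have := ler_norm (- e).
rewrite normrN /shrink1 => le_Ne; case: (ltrP 0 t) => [t_gt0|t_le0].
  rewrite mulr1 (gtr0_norm t_gt0) in lt_e *.
  by have -> : g <= t + e by lra.
rewrite mulrN1 opprK (ler0_norm t_le0) in lt_e *.
have -> : (g <= t + e) = false by apply/negbTE; rewrite -ltNge; lra.
by have -> : t + e <= - g by lra.
Qed.

Lemma shrink_translate (L : nat) g (a e : 'cV[R]_L) : 0 <= g ->
  (forall j, g + `|e j ord0| < `|a j ord0|) ->
  shrink g (a + e) = a + e - g *: sgnv a.
Proof.
move=> g_ge0 e_small; apply/matrixP => j k; rewrite (ord1 k) !mxE.
exact: shrink1_translate.
Qed.

Lemma sgnv_norm (L : nat) (z : 'cV[R]_L) k : `|sgnv z k ord0| = 1.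
Proof. by rewrite mxE; case: ifP; rewrite ?normrN normr1. Qed.

End Shrinkage.

Lemma mxnorm_inf_bound (R : realFieldType) (m n : nat) (M : 'M[R]_(m, n))
    (v : 'cV[R]_n) j :
  (forall k, `|v k ord0| <= 1) -> `|(M *m v) j ord0| <= mxnorm_inf M.
Proof.
move=> v_le1; rewrite mxE; apply: le_trans (ler_norm_sum _ _ _) _.
apply: le_trans _ (le_bigmax _ _ j); apply: ler_sum => k _.
by rewrite normrM ler_piMr.
Qed.

Section FixedPointEquation.
Variables (R : realFieldType) (L N : nat) (T : 'M[R]_(L, N)) (g : R).
Hypotheses (rankT : \rank T = N) (g_gt0 : 0 < g).
Let P := pinv T.

Lemma Hrel_pinv_bounded x y : Hrel T g x y ->
  exists2 s : 'cV[R]_L, (forall k, `|s k ord0| <= 1) & y = g *: (P *m s).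
Proof.
rewrite /Hrel; set z := T *m (x + y) => x_eq.
exists (g^-1 *: (z - shrink g z)).
  move=> k; rewrite !mxE normrM normfV (gtr0_norm g_gt0) ler_pdivrMl // mulr1.
  exact/shrink1_dist/ltW.
apply: (@addrBI_eq _ x); rewrite -scalemxAr scalerA divff ?gt_eqF // scale1r.
by rewrite mulmxBr -x_eq mulmxA mul_pinv_mx // mul1mx opprB addrC subrK.
Qed.

Lemma pinv_shrink_perturb x (s : 'cV[R]_L) : U_set T g x ->
  (forall k, `|s k ord0| <= 1) ->
  P *m shrink g (T *m (x + g *: (P *m s)))
    = x + g *: (P *m s) - g *: (P *m sgnv (T *m x)).
Proof.
move=> Ux s_le1; rewrite mulmxDr -scalemxAr mulmxA shrink_translate ?ltW //.
  by rewrite !mulmxDr mulmxN -!scalemxAr !mulmxA mul_pinv_mx // !mul1mx.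
move=> j; apply: le_lt_trans (Ux j); rewrite mxE normrM (gtr0_norm g_gt0).
by rewrite mulrDr mulr1 addrC lerD2r ler_pM2l // mxnorm_inf_bound.
Qed.

End FixedPointEquation.

Theorem theorem2p7 (R : realFieldType) (L N : nat) (T : 'M[R]_(L, N)) (g : R) :
  (N <= L)%N -> \rank T = N -> 0 < g ->
  forall x : 'cV[R]_N, U_set T g x ->
  forall y : 'cV[R]_N, Hrel T g x y <-> y = g *: (pinv T *m sgnv (T *m x)).
Proof.
move=> _ rankT g_gt0 x Ux y; split.
- move=> x_eq; have [s s_le1 y_def] := Hrel_pinv_bounded rankT g_gt0 x_eq.
  by apply: (@addrBI_eq _ x); rewrite [RHS]x_eq y_def pinv_shrink_perturb.
- move=> y_def; rewrite /Hrel y_def pinv_shrink_perturb ?addrK // => k.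
  by rewrite sgnv_norm.
Qed.
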